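(* Let $X$ be one of the Killing vector fields $\partial_x$, $\partial_\theta$, $x\partial_x+y\partial_y$, $\frac12(x^2-y^2)\partial_x+xy\partial_y$ of $\mathrm{SL}(2,\mathbb R)$. Then every $\mathcal A$-invariant $X$-translator is a surface of type $\Sigma_{x_0}$ or of type $\Sigma_{\theta_0}$ (depending on $X$).
   Context: $\mathrm{SL}(2,\mathbb R)$ is given global coordinates $(x,y,\theta)\in\mathbb R\times(0,\infty)\times\mathbb R$ via $(x,y,\theta)\mapsto \begin{pmatrix}1&x\\0&1\end{pmatrix}\begin{pmatrix}\sqrt y&0\\0&1/\sqrt y\end{pmatrix}\begin{pmatrix}\cos\theta&\sin\theta\\-\sin\theta&\cos\theta\end{pmatrix}$, with the metric $\langle\,,\rangle=\frac{dx^2+dy^2}{4y^2}+\left(d\theta+\frac{dx}{2y}\right)^2$. Orthonormal frame: $e_1=2y\partial_x-\partial_\theta$, $e_2=2y\partial_y$, $e_3=\partial_\theta$. A surface with unit normal $N$ and mean curvature $H$ (average of principal curvatures w.r.t. $N$) is an $X$-translator if $H=\langle N,X\rangle$. $\mathcal A$-invariant surfaces are those parametrized as $(s,t)\mapsto(x(s),t,\theta(s))$, $t>0$, with regular generating curve $(x(s),\theta(s))$; for them $N=\frac1\Phi(-(x'+2t\theta')e_1+x'e_3)$ and $H=\frac{2t^2}{\Phi^3}(x'\theta''-\theta'x'')$, $\Phi=\sqrt{(x'+2t\theta')^2+x'^2}$. For constants $x_0,\theta_0$: $\Sigma_{x_0}=\{x=x_0\}$, $\Sigma_{\theta_0}=\{\theta=\theta_0\}$.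 *)

From Stdlib Require Import Reals.
From Coquelicot Require Import Coquelicot.
Open Scope R_scope.

(* Points and tangent vectors of SL(2,R) in the global coordinates (x,y,theta).
   A tangent vector is given by its components (a,b,c) w.r.t. d_x, d_y, d_theta. *)
Definition vec := (R * R * R)%type.
Definition cx (v : vec) : R := fst (fst v).
Definition cy (v : vec) : R := snd (fst v).
Definition ct (v : vec) : R := snd v.

Definition vadd (v w : vec) : vec := (cx v + cx w, cy v + cy w, ct v + ct w).
Definition vscale (r : R) (v : vec) : vec := (r * cx v, r * cy v, r * ct v).

Definition metric (p v w : vec) : R :=
  let y := cy p in
  (cx v * cx w + cy v * cy w) / (4 * y ^ 2)
  + (ct v + cx v / (2 * y)) * (ct w + cx w / (2 * y)).

(* Orthonormal frame e1 = 2y d_x - d_theta, e2 = 2y d_y, e3 = d_theta. *)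
Definition e1 (p : vec) : vec := (2 * cy p, 0, -1).
Definition e2 (p : vec) : vec := (0, 2 * cy p, 0).
Definition e3 (p : vec) : vec := (0, 0, 1).

Inductive KillingField := K_dx | K_dtheta | K_dil | K_par.

Definition killing (K : KillingField) (p : vec) : vec :=
  match K with
  | K_dx => (1, 0, 0)
  | K_dtheta => (0, 0, 1)
  | K_dil => (cx p, cy p, 0)
  | K_par => ((cx p ^ 2 - cy p ^ 2) / 2, cx p * cy p, 0)
  end.

(* A-invariant surface (s,t) |-> (x(s), t, theta(s)), t > 0. *)
Definition ptA (x th : R -> R) (s t : R) : vec := (x s, t, th s).

Definition PhiA (x th : R -> R) (s t : R) : R :=
  sqrt ((Derive x s + 2 * t * Derive th s) ^ 2 + (Derive x s) ^ 2).

Definition normalA (x th : R -> R) (s t : R) : vec :=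
  let p := ptA x th s t in
  vscale (/ PhiA x th s t)
    (vadd (vscale (- (Derive x s + 2 * t * Derive th s)) (e1 p))
          (vscale (Derive x s) (e3 p))).

Definition meanCurvA (x th : R -> R) (s t : R) : R :=
  2 * t ^ 2 / (PhiA x th s t) ^ 3
  * (Derive x s * Derive (Derive th) s - Derive th s * Derive (Derive x) s).

Definition inI (a b : Rbar) (s : R) : Prop := Rbar_lt a s /\ Rbar_lt s b.

Definition regular_curve (a b : Rbar) (x th : R -> R) : Prop :=
  forall s, inI a b s ->
    ex_derive x s /\ ex_derive th s /\
    ex_derive (Derive x) s /\ ex_derive (Derive th) s /\
    continuous (Derive (Derive x)) s /\ continuous (Derive (Derive th)) s /\
    (Derive x s <> 0 \/ Derive th s <> 0).

Definition A_translator (K : KillingField) (a b : Rbar) (x th : R -> R) : Prop :=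
  forall s t, inI a b s -> 0 < t ->
    meanCurvA x th s t
    = metric (ptA x th s t) (normalA x th s t) (killing K (ptA x th s t)).

From Stdlib Require Import Reals Lra Psatz.
From Coquelicot Require Import Coquelicot.
Open Scope R_scope.

(* Writing p = x', q = theta', the formulas for N and H give
   <N, V> = (p V_theta - q V_x) / Phi, so the translator equation reads
   2 t^2 (p theta'' - q x'') = ((p + 2 t q)^2 + p^2) (p V_theta - q V_x).
   For each field this is a polynomial identity in t > 0.  Its coefficients
   force p = 0 for d_theta and q = 0 for the parabolic field; for d_x and the
   dilation they give c p q = 0 and p theta'' - q x'' = -2 c q^3 with weight
   c = 1, resp. c = x.  Differentiating c p q = 0 then yields
   -2 c^2 q^4 = c' p q^2, whose sides have opposite signs since c' p >= 0;
   hence c q = 0 and c' p q = 0.  For d_x this is q = 0.  For the dilation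
   p q = 0 and x q = 0; as (p, q) never vanishes, p^2 - q^2 has constant sign
   on the interval, so either q = 0 everywhere or x = 0 everywhere. *)

Definition wronskian (f g : R -> R) (s : R) : R := f s * Derive g s - g s * Derive f s.

Lemma PhiA_gt0 x th s t :
  t <> 0 -> Derive x s <> 0 \/ Derive th s <> 0 -> 0 < PhiA x th s t.
Proof.
  intros Ht Hr; apply sqrt_lt_R0.
  set (p := Derive x s) in *; set (q := Derive th s) in *.
  destruct (Req_dec p 0) as [Hp | Hp].
  - destruct Hr as [Hr | Hq]; [contradiction|].
    rewrite Hp; replace ((0 + 2 * t * q) ^ 2 + 0 ^ 2) with ((2 * t * q) ^ 2) by ring.
    apply pow2_gt_0, Rmult_integral_contrapositive; split; [lra | exact Hq].
  - pose proof (pow2_ge_0 (p + 2 * t * q)); pose proof (pow2_gt_0 p Hp); lra.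
Qed.

Lemma metric_normalA x th s t v :
  t <> 0 -> 0 < PhiA x th s t ->
  metric (ptA x th s t) (normalA x th s t) v
  = (Derive x s * ct v - Derive th s * cx v) / PhiA x th s t.
Proof.
  intros Ht HPhi.
  unfold metric, normalA, ptA, vscale, vadd, e1, e3, cx, cy, ct; simpl.
  field; lra.
Qed.

Lemma translator_equation x th s t v :
  0 < t -> Derive x s <> 0 \/ Derive th s <> 0 ->
  meanCurvA x th s t = metric (ptA x th s t) (normalA x th s t) v ->
  2 * t ^ 2 * wronskian (Derive x) (Derive th) s
  = ((Derive x s + 2 * t * Derive th s) ^ 2 + Derive x s ^ 2)
    * (Derive x s * ct v - Derive th s * cx v).
Proof.
  intros Ht Hr H.
  assert (HPhi : 0 < PhiA x th s t) by (apply PhiA_gt0; [lra | exact Hr]).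
  rewrite metric_normalA in H by lra.
  assert (HPhi2 : PhiA x th s t ^ 2
                  = (Derive x s + 2 * t * Derive th s) ^ 2 + Derive x s ^ 2).
  { unfold PhiA; rewrite pow2_sqrt; [reflexivity|].
    pose proof (pow2_ge_0 (Derive x s + 2 * t * Derive th s)).
    pose proof (pow2_ge_0 (Derive x s)); lra. }
  rewrite <- HPhi2.
  assert (E : 2 * t ^ 2 * wronskian (Derive x) (Derive th) s
              = meanCurvA x th s t * PhiA x th s t ^ 3)
    by (unfold meanCurvA, wronskian; field; lra).
  rewrite E, H; field; lra.
Qed.

Lemma pow_eq0 (r : R) (n : nat) : r ^ n = 0 -> r = 0.
Proof.
  intros H; destruct (Req_dec r 0) as [|Hr]; [assumption|].
  exfalso; exact (pow_nonzero r n Hr H).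
Qed.

Lemma quartic_coefs_eq0 (c0 c1 c2 c3 c4 : R) :
  (forall t, 0 < t -> c0 + c1 * t + c2 * t ^ 2 + c3 * t ^ 3 + c4 * t ^ 4 = 0) ->
  c0 = 0 /\ c1 = 0 /\ c2 = 0 /\ c3 = 0 /\ c4 = 0.
Proof.
  intros H.
  pose proof (H 1 ltac:(lra)); pose proof (H 2 ltac:(lra)); pose proof (H 3 ltac:(lra));
  pose proof (H 4 ltac:(lra)); pose proof (H 5 ltac:(lra)).
  repeat split; lra.
Qed.

Section TranslatorCoefficients.
Variables p q w : R.
Let S (t : R) : R := (p + 2 * t * q) ^ 2 + p ^ 2.

Lemma translator_coefs_linear_weight (c : R) :
  (forall t, 0 < t -> 2 * t ^ 2 * w = S t * - (q * c)) ->
  c * p * q = 0 /\ w = -2 * c * q ^ 3.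
Proof.
  intros H.
  destruct (quartic_coefs_eq0 (2 * c * q * p ^ 2) (4 * c * p * q ^ 2)
              (2 * w + 4 * c * q ^ 3) 0 0) as (_ & H1 & H2 & _).
  { intros t Ht; specialize (H t Ht); unfold S in H; lra. }
  split; [|lra].
  apply (pow_eq0 _ 2); replace ((c * p * q) ^ 2) with (c * p * (4 * c * p * q ^ 2) / 4) by field.
  rewrite H1; field.
Qed.

Lemma translator_coefs_dtheta :
  (forall t, 0 < t -> 2 * t ^ 2 * w = S t * p) -> p = 0.
Proof.
  intros H.
  destruct (quartic_coefs_eq0 (- 2 * p ^ 3) (- 4 * p ^ 2 * q) (2 * w - 4 * p * q ^ 2) 0 0)
    as (H0 & _).
  { intros t Ht; specialize (H t Ht); unfold S in H; lra. }
  apply (pow_eq0 _ 3); lra.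
Qed.

Lemma translator_coefs_parabolic (X : R) :
  (forall t, 0 < t -> 2 * t ^ 2 * w = S t * - (q * ((X ^ 2 - t ^ 2) / 2))) -> q = 0.
Proof.
  intros H.
  destruct (quartic_coefs_eq0 (X ^ 2 * q * p ^ 2) (2 * X ^ 2 * p * q ^ 2)
              (2 * w - q * p ^ 2 + 2 * X ^ 2 * q ^ 3) (- 2 * p * q ^ 2) (- 2 * q ^ 3))
    as (_ & _ & _ & _ & H4).
  { intros t Ht; specialize (H t Ht); unfold S in H; lra. }
  apply (pow_eq0 _ 3); lra.
Qed.
End TranslatorCoefficients.

Lemma ex_derive_continuity_pt (f : R -> R) s : ex_derive f s -> continuity_pt f s.
Proof. intros H; apply continuity_pt_filterlim, (ex_derive_continuous f s H). Qed.

Section OpenInterval.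
Variables a b : Rbar.

Lemma inI_inhabited : Rbar_lt a b -> exists s, inI a b s.
Proof.
  unfold inI; destruct a as [u| |], b as [v| |]; simpl; intros H; try contradiction.
  - exists ((u + v) / 2); lra.
  - exists (u + 1); lra.
  - exists (v - 1); lra.
  - exists 0; tauto.
Qed.

Lemma inI_between u v w : inI a b u -> inI a b v -> u <= w <= v -> inI a b w.
Proof. unfold inI; destruct a, b; simpl; intros; lra. Qed.

Lemma inI_locally s : inI a b s -> locally s (inI a b).
Proof.
  intros [Ha Hb].
  exact (filter_and _ _ (open_Rbar_gt' (Finite s) a Ha) (open_Rbar_lt' (Finite s) b Hb)).
Qed.

Lemma Derive_eq0_inI (g : R -> R) s :
  inI a b s -> (forall u, inI a b u -> g u = 0) -> Derive g s = 0.
Proof.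
  intros Hs Hg.
  rewrite (Derive_ext_loc g (fun _ => 0)); [apply Derive_const|].
  exact (filter_imp _ _ Hg (inI_locally s Hs)).
Qed.

Lemma inI_const_of_Derive_eq0 (f : R -> R) :
  Rbar_lt a b ->
  (forall u, inI a b u -> ex_derive f u /\ Derive f u = 0) ->
  exists c, forall u, inI a b u -> f u = c.
Proof.
  intros Hab Hf; destruct (inI_inhabited Hab) as [s0 Hs0]; exists (f s0); intros u Hu.
  assert (Hd : forall w, inI a b w -> is_derive f w 0).
  { intros w Hw; destruct (Hf w Hw) as [Hex H0]; rewrite <- H0; exact (Derive_correct f w Hex). }
  destruct (Rtotal_order u s0) as [Hlt | [-> | Hgt]]; [| reflexivity |].
  - apply eq_is_derive; [|exact Hlt].
    intros w Hw; apply Hd, (inI_between u s0); auto.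
  - symmetry; apply eq_is_derive; [|exact Hgt].
    intros w Hw; apply Hd, (inI_between s0 u); auto.
Qed.

Lemma inI_IVT (f : R -> R) u v :
  (forall w, inI a b w -> continuity_pt f w) ->
  inI a b u -> inI a b v -> f u < 0 -> 0 < f v ->
  exists z, inI a b z /\ f z = 0.
Proof.
  intros Hc Hu Hv Hfu Hfv.
  destruct (Rtotal_order u v) as [Huv | [-> | Hvu]]; [| lra |].
  - destruct (Ranalysis5.IVT_interv f u v) as [z [Hz Hfz]]; auto.
    { intros w Hw; apply Hc, (inI_between u v); auto. }
    exists z; split; [apply (inI_between u v)|]; auto.
  - destruct (Ranalysis5.IVT_interv (fun w => - f w) v u) as [z [Hz Hfz]]; auto; try lra.
    { intros w Hw; apply continuity_pt_opp, Hc, (inI_between v u); auto. }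
    exists z; split; [apply (inI_between v u)|]; auto; lra.
Qed.

Lemma inI_complementary_zeros (f g : R -> R) u v :
  (forall w, inI a b w -> continuity_pt f w /\ continuity_pt g w) ->
  (forall w, inI a b w -> f w * g w = 0 /\ (f w <> 0 \/ g w <> 0)) ->
  inI a b u -> inI a b v -> g u <> 0 -> g v <> 0.
Proof.
  intros Hc Hfg Hu Hv Hgu Hgv.
  assert (Hfu : f u = 0).
  { destruct (Rmult_integral _ _ (proj1 (Hfg u Hu))); [assumption | contradiction]. }
  assert (Hfv : f v <> 0) by (destruct (proj2 (Hfg v Hv)); tauto).
  destruct (inI_IVT (fun w => g w * g w - f w * f w) v u) as [z [Hz Hhz]]; auto.
  - intros w Hw; destruct (Hc w Hw).
    apply continuity_pt_minus; apply continuity_pt_mult; assumption.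
  - rewrite Hgv; pose proof (pow2_gt_0 _ Hfv); simpl in *; lra.
  - rewrite Hfu; pose proof (pow2_gt_0 _ Hgu); simpl in *; lra.
  - destruct (Hfg z Hz) as [Hp Hr].
    assert (Hboth : f z = 0 /\ g z = 0).
    { destruct (Rmult_integral _ _ Hp) as [H0 | H0]; rewrite H0 in Hhz; split; nra. }
    destruct Hr; tauto.
Qed.
End OpenInterval.

Section WeightedWronskian.
Variables (a b : Rbar) (x th c : R -> R).
Hypothesis Hderiv : forall s, inI a b s ->
  ex_derive c s /\ ex_derive (Derive x) s /\ ex_derive (Derive th) s.
Hypothesis Hsign : forall s, inI a b s -> 0 <= Derive c s * Derive x s.
Hypothesis Hprod : forall s, inI a b s -> c s * Derive x s * Derive th s = 0.
Hypothesis Hwr : forall s, inI a b s ->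
  wronskian (Derive x) (Derive th) s = -2 * c s * Derive th s ^ 3.

Lemma weighted_wronskian_vanishing s : inI a b s ->
  c s * Derive th s = 0 /\ Derive c s * Derive x s * Derive th s ^ 2 = 0.
Proof.
  intros Hs; destruct (Hderiv s Hs) as (Hc & Hx' & Hth').
  assert (Hd : is_derive (fun u => c u * Derive x u * Derive th u) s
     ((Derive c s * Derive x s + c s * Derive (Derive x) s) * Derive th s
      + c s * Derive x s * Derive (Derive th) s)).
  { apply (Derive.is_derive_mult (fun u => c u * Derive x u) (Derive th));
      [apply Derive.is_derive_mult|]; apply Derive_correct; assumption. }
  assert (Hd0 : (Derive c s * Derive x s + c s * Derive (Derive x) s) * Derive th s
                + c s * Derive x s * Derive (Derive th) s = 0).
  { rewrite <- (is_derive_unique _ _ _ Hd); exact (Derive_eq0_inI a b _ s Hs Hprod). }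
  pose proof (Hwr s Hs) as Hw; pose proof (Hprod s Hs) as Hp; pose proof (Hsign s Hs) as Hsg.
  unfold wronskian in Hw.
  set (p := Derive x s) in *; set (q := Derive th s) in *; set (k := c s) in *.
  set (k' := Derive c s) in *.
  set (A := Derive (Derive th) s) in *; set (B := Derive (Derive x) s) in *.
  (* multiply the Wronskian identity by [k q] and eliminate with the derivative of [k p q] *)
  assert (Hkey : -2 * (k * q ^ 2) ^ 2 = k' * p * q ^ 2).
  { transitivity (k * q * (p * A - q * B)); [rewrite Hw; ring|].
    transitivity (2 * A * (k * p * q) - q * ((k' * p + k * B) * q + k * p * A) + k' * p * q ^ 2);
      [ring|].
    rewrite Hp, Hd0; ring. }
  assert (Hq2 : k * q ^ 2 = 0) by nra.
  split; [|nra].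
  apply (pow_eq0 _ 2); replace ((k * q) ^ 2) with (k * (k * q ^ 2)) by ring.
  rewrite Hq2; ring.
Qed.
End WeightedWronskian.

Section AInvariantTranslators.
Variables (a b : Rbar) (x th : R -> R).
Hypothesis Hab : Rbar_lt a b.
Hypothesis Hreg : regular_curve a b x th.

Lemma A_translator_equation K s t :
  A_translator K a b x th -> inI a b s -> 0 < t ->
  2 * t ^ 2 * wronskian (Derive x) (Derive th) s
  = ((Derive x s + 2 * t * Derive th s) ^ 2 + Derive x s ^ 2)
    * (Derive x s * ct (killing K (ptA x th s t))
       - Derive th s * cx (killing K (ptA x th s t))).
Proof.
  intros Htr Hs Ht; apply translator_equation; [exact Ht | | exact (Htr s t Hs Ht)].
  apply Hreg, Hs.
Qed.

Lemma x_const_of_Derive_eq0 :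
  (forall s, inI a b s -> Derive x s = 0) -> exists x0, forall s, inI a b s -> x s = x0.
Proof.
  intros H0; apply (inI_const_of_Derive_eq0 a b x Hab); intros u Hu.
  split; [apply Hreg, Hu | exact (H0 u Hu)].
Qed.

Lemma th_const_of_Derive_eq0 :
  (forall s, inI a b s -> Derive th s = 0) -> exists th0, forall s, inI a b s -> th s = th0.
Proof.
  intros H0; apply (inI_const_of_Derive_eq0 a b th Hab); intros u Hu.
  split; [apply Hreg, Hu | exact (H0 u Hu)].
Qed.

Lemma dtheta_translator_x_const :
  A_translator K_dtheta a b x th -> exists x0, forall s, inI a b s -> x s = x0.
Proof.
  intros Htr; apply x_const_of_Derive_eq0; intros s Hs.
  apply (translator_coefs_dtheta _ (Derive th s) (wronskian (Derive x) (Derive th) s)).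
  intros t Ht; rewrite (A_translator_equation K_dtheta s t Htr Hs Ht);
    cbn [killing ptA cx cy ct fst snd]; ring.
Qed.

Lemma parabolic_translator_th_const :
  A_translator K_par a b x th -> exists th0, forall s, inI a b s -> th s = th0.
Proof.
  intros Htr; apply th_const_of_Derive_eq0; intros s Hs.
  apply (translator_coefs_parabolic (Derive x s) _ (wronskian (Derive x) (Derive th) s) (x s)).
  intros t Ht; rewrite (A_translator_equation K_par s t Htr Hs Ht);
    cbn [killing ptA cx cy ct fst snd]; field.
Qed.

Lemma dx_translator_th_const :
  A_translator K_dx a b x th -> exists th0, forall s, inI a b s -> th s = th0.
Proof.
  intros Htr.
  assert (Hcoef : forall s, inI a b s ->
            1 * Derive x s * Derive th s = 0
            /\ wronskian (Derive x) (Derive th) s = -2 * 1 * Derive th s ^ 3).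
  { intros s Hs; apply translator_coefs_linear_weight; intros t Ht.
    rewrite (A_translator_equation K_dx s t Htr Hs Ht);
    cbn [killing ptA cx cy ct fst snd]; ring. }
  apply th_const_of_Derive_eq0; intros s Hs.
  destruct (weighted_wronskian_vanishing a b x th (fun _ => 1)) with s as [Hq _].
  - intros u Hu; destruct (Hreg u Hu) as (_ & _ & Hx' & Hth' & _).
    repeat split; [apply ex_derive_const | exact Hx' | exact Hth'].
  - intros u _; rewrite Derive_const; lra.
  - exact (fun u Hu => proj1 (Hcoef u Hu)).
  - exact (fun u Hu => proj2 (Hcoef u Hu)).
  - exact Hs.
  - lra.
Qed.

Lemma dil_translator_orthogonal s : A_translator K_dil a b x th -> inI a b s ->
  x s * Derive th s = 0 /\ Derive x s * Derive th s = 0.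
Proof.
  intros Htr Hs.
  assert (Hcoef : forall u, inI a b u ->
            x u * Derive x u * Derive th u = 0
            /\ wronskian (Derive x) (Derive th) u = -2 * x u * Derive th u ^ 3).
  { intros u Hu; apply translator_coefs_linear_weight; intros t Ht.
    rewrite (A_translator_equation K_dil u t Htr Hu Ht);
    cbn [killing ptA cx cy ct fst snd]; ring. }
  destruct (weighted_wronskian_vanishing a b x th x) with s as [Hxq Hpq].
  - intros u Hu; destruct (Hreg u Hu) as (Hx & _ & Hx' & Hth' & _); auto.
  - intros u _; apply Rle_0_sqr.
  - exact (fun u Hu => proj1 (Hcoef u Hu)).
  - exact (fun u Hu => proj2 (Hcoef u Hu)).
  - exact Hs.
  - split; [exact Hxq|].
    apply (pow_eq0 _ 2); rewrite <- Hpq; ring.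
Qed.

Lemma dil_translator_x0_or_th_const : A_translator K_dil a b x th ->
  (exists x0, forall s, inI a b s -> x s = x0)
  \/ (exists th0, forall s, inI a b s -> th s = th0).
Proof.
  intros Htr.
  assert (Hcont : forall s, inI a b s ->
            continuity_pt (Derive x) s /\ continuity_pt (Derive th) s).
  { intros s Hs; destruct (Hreg s Hs) as (_ & _ & Hx' & Hth' & _).
    split; apply ex_derive_continuity_pt; assumption. }
  assert (Hzeros : forall s, inI a b s ->
            Derive x s * Derive th s = 0 /\ (Derive x s <> 0 \/ Derive th s <> 0)).
  { intros s Hs; split; [apply (dil_translator_orthogonal s Htr Hs) | apply Hreg, Hs]. }
  destruct (inI_inhabited a b Hab) as [s0 Hs0].
  destruct (Req_dec (Derive th s0) 0) as [Hq0 | Hq0].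
  - right; apply th_const_of_Derive_eq0; intros s Hs.
    destruct (Req_dec (Derive th s) 0) as [| Hq]; [assumption | exfalso].
    exact (inI_complementary_zeros a b _ _ s s0 Hcont Hzeros Hs Hs0 Hq Hq0).
  - left; exists 0; intros s Hs.
    pose proof (inI_complementary_zeros a b _ _ s0 s Hcont Hzeros Hs0 Hs Hq0) as Hq.
    destruct (Rmult_integral _ _ (proj1 (dil_translator_orthogonal s Htr Hs))); [assumption|].
    contradiction.
Qed.
End AInvariantTranslators.

Theorem mainTheorem7 (K : KillingField) (a b : Rbar) (x th : R -> R) :
  Rbar_lt a b ->
  regular_curve a b x th ->
  A_translator K a b x th ->
  (exists x0 : R, forall s, inI a b s -> x s = x0) \/
  (exists th0 : R, forall s, inI a b s -> th s = th0).
Proof.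
  intros Hab Hreg Htr; destruct K.
  - right; exact (dx_translator_th_const a b x th Hab Hreg Htr).
  - left; exact (dtheta_translator_x_const a b x th Hab Hreg Htr).
  - exact (dil_translator_x0_or_th_const a b x th Hab Hreg Htr).
  - right; exact (parabolic_translator_th_const a b x th Hab Hreg Htr).
Qed.
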